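(* Let $X_{\mathcal M}$ and $Y_{\mathcal M}$ be independent multiterminal sources on $\mathcal M$, and let $Z_{\mathcal M}$ be the clubbed source, $Z_i=(X_i,Y_i)$ for $i\in\mathcal M$. Then $$\mathbf I(Z_{\mathcal M})\ge\mathbf I(X_{\mathcal M})+\mathbf I(Y_{\mathcal M}),$$ with equality if and only if $\Pi^*_X\cap\Pi^*_Y\ne\emptyset$.
   Context: Let $\mathcal M=\{1,\dots,m\}$, $m\ge2$. A source $W_{\mathcal M}=(W_1,\dots,W_m)$ is a tuple of jointly distributed finite-valued random variables, and $W_A=(W_i:i\in A)$. The sources $X_{\mathcal M}$ and $Y_{\mathcal M}$ being independent means the tuple $X_{\mathcal M}$ is independent of the tuple $Y_{\mathcal M}$. For a partition $\mathcal P$ of $\mathcal M$ with $|\mathcal P|\ge2$, $\Delta_W(\mathcal P)=\frac1{|\mathcal P|-1}[\sum_{A\in\mathcal P}H(W_A)-H(W_{\mathcal M})]$, and $\mathbf I(W_{\mathcal M})=\min_{\mathcal P}\Delta_W(\mathcal P)$. $\Pi^*_X$ (resp. $\Pi^*_Y$) is the set of partitions attaining the minimum for $X_{\mathcal M}$ (resp. $Y_{\mathcal M}$). *)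

From mathcomp Require Import all_boot.
From Stdlib Require Import Reals.
Set Implicit Arguments. Unset Strict Implicit. Unset Printing Implicit Defensive.

Definition is_prob (Omega : finType) (P : Omega -> R) : Prop :=
  (forall w, (0 <= P w)%R) /\ \big[Rplus/0%R]_(w : Omega) P w = 1%R.

Definition prob (Omega : finType) (P : Omega -> R) (E : pred Omega) : R :=
  \big[Rplus/0%R]_(w : Omega | E w) P w.

Section Source.
Variables (m : nat) (Omega : finType) (P : Omega -> R).
Variables (T : 'I_m -> eqType) (W : forall i : 'I_m, Omega -> T i).

Definition same_on (A : {set 'I_m}) (w w' : Omega) : bool :=
  [forall i in A, W i w == W i w'].

Definition entropy (A : {set 'I_m}) : R :=
  (- \big[Rplus/0%R]_(w : Omega) (P w * ln (prob P (same_on A w))))%R.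

Definition Delta (Pt : {set {set 'I_m}}) : R :=
  ((\big[Rplus/0%R]_(A in Pt) entropy A - entropy setT)
     / INR (#|Pt| - 1))%R.

End Source.

Definition valid_partition (m : nat) (Pt : {set {set 'I_m}}) : bool :=
  partition Pt [set: 'I_m] && (1 < #|Pt|).

Definition singletons (m : nat) : {set {set 'I_m}} := [set [set i] | i : 'I_m].

Definition MMI (m : nat) (Omega : finType) (P : Omega -> R)
  (T : 'I_m -> eqType) (W : forall i : 'I_m, Omega -> T i) : R :=
  \big[Rmin/Delta P W (singletons m)]_(Pt | valid_partition Pt) Delta P W Pt.

Definition optimal_partition (m : nat) (Omega : finType) (P : Omega -> R)
  (T : 'I_m -> eqType) (W : forall i : 'I_m, Omega -> T i)
  (Pt : {set {set 'I_m}}) : Prop :=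
  valid_partition Pt /\ Delta P W Pt = MMI P W.

Definition independent (m : nat) (Omega : finType) (P : Omega -> R)
  (TX TY : 'I_m -> eqType)
  (X : forall i : 'I_m, Omega -> TX i) (Y : forall i : 'I_m, Omega -> TY i) : Prop :=
  forall w1 w2 : Omega,
    prob P (fun w => same_on X setT w1 w && same_on Y setT w2 w) =
    (prob P (same_on X setT w1) * prob P (same_on Y setT w2))%R.

Definition club (m : nat) (Omega : finType)
  (TX TY : 'I_m -> eqType)
  (X : forall i : 'I_m, Omega -> TX i) (Y : forall i : 'I_m, Omega -> TY i) :
  forall i : 'I_m, Omega -> (TX i * TY i)%type :=
  fun i w => (X i w, Y i w).

(* Independence of the full tuples X_M and Y_M extends, by summing over the classes of equal
   values, to any events determined by X_M and by Y_M.  So the probability of every joint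
   value of Z_A factors, H(Z_A) = H(X_A) + H(Y_A) for every set of terminals A, and therefore
   Delta_Z(P) = Delta_X(P) + Delta_Y(P) for every partition P.  Minimising over P, the minimum
   of the sum dominates the sum of the minima, with equality exactly when one partition
   minimises both summands. *)
From Pilot Require Import Defs.
From HB Require Import structures.
From mathcomp Require Import all_boot.
From Stdlib Require Import Reals Lra.
Set Implicit Arguments. Unset Strict Implicit. Unset Printing Implicit Defensive.

HB.instance Definition _ := Monoid.isComLaw.Build R 0%R Rplus
  (fun x y z => esym (Rplus_assoc x y z)) Rplus_comm Rplus_0_l.
HB.instance Definition _ := Monoid.isComLaw.Build R 1%R Rmult
  (fun x y z => esym (Rmult_assoc x y z)) Rmult_comm Rmult_1_l.
HB.instance Definition _ := Monoid.isMulLaw.Build R 0%R Rmult Rmult_0_l Rmult_0_r.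
HB.instance Definition _ := Monoid.isAddLaw.Build R Rmult Rplus
  Rmult_plus_distr_r Rmult_plus_distr_l.
HB.instance Definition _ := SemiGroup.isComLaw.Build R Rmin Rmin_assoc Rmin_comm.

Local Open Scope R_scope.

Lemma prob_ge_mass (Omega : finType) (P : Omega -> R) (E : pred Omega) w :
  (forall w', 0 <= P w') -> E w -> P w <= prob P E.
Proof.
move=> P_ge0 Ew; rewrite /prob (bigD1 w) //=.
have : 0 <= \big[Rplus/0]_(w' | E w' && (w' != w)) P w'.
  by apply: big_ind => [||w' _]; [lra | move=> x y; lra | exact: P_ge0].
lra.
Qed.

Section ClassPartition.
Variables (Omega : finType) (P : Omega -> R) (S : rel Omega).
Hypothesis S_equiv : equivalence_rel S.

Let S_refl : reflexive S. Proof. by case/equivalence_relP: S_equiv. Qed.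
Let S_ltrans : left_transitive S. Proof. by case/equivalence_relP: S_equiv. Qed.
Let S_sym w w' : S w w' -> S w' w. Proof. by move=> h; rewrite -(S_ltrans h w). Qed.

Definition class_rep (w : Omega) : Omega := odflt w [pick w' | S w w'].

Lemma class_repP w : S w (class_rep w).
Proof. by rewrite /class_rep; case: pickP => [//|/(_ w)]; rewrite S_refl. Qed.

Lemma class_rep_eq w w' : S w w' -> class_rep w = class_rep w'.
Proof.
move=> Sww'; rewrite /class_rep (eq_pick (S_ltrans Sww')).
by case: pickP => [//|/(_ w')]; rewrite S_refl.
Qed.

Lemma class_rep_id w : class_rep (class_rep w) = class_rep w.
Proof. exact/esym/class_rep_eq/class_repP. Qed.

Lemma eq_class_rep r w : class_rep r = r -> (class_rep w == r) = S r w.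
Proof.
move=> rep_r; apply/eqP/idP => [<-|Srw]; first exact/S_sym/class_repP.
by rewrite -(class_rep_eq Srw).
Qed.

Lemma prob_class_split (E F : pred Omega) :
  (forall w w', S w w' -> E w = E w') ->
  prob P (fun w => E w && F w) =
  \big[Rplus/0]_(r | (class_rep r == r) && E r) prob P (fun w => S r w && F w).
Proof.
move=> E_inv; rewrite /prob (partition_big class_rep (fun r => class_rep r == r));
  last by move=> w _; rewrite class_rep_id.
rewrite [RHS]big_mkcondr; apply: eq_bigr => r /eqP rep_r.
have E_class w : S r w -> E w = E r by move=> Srw; rewrite (E_inv _ _ Srw).
case Er: (E r).
  apply: eq_bigl => w; rewrite eq_class_rep //.
  by case Srw: (S r w); rewrite ?andbF //= (E_class w Srw) Er andbT.
rewrite big_pred0 // => w; rewrite eq_class_rep //.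
by case Srw: (S r w); rewrite ?andbF // (E_class w Srw) Er.
Qed.

Lemma prob_class_sum (E : pred Omega) :
  (forall w w', S w w' -> E w = E w') ->
  prob P E = \big[Rplus/0]_(r | (class_rep r == r) && E r) prob P (S r).
Proof.
move=> E_inv; transitivity (prob P (fun w => E w && predT w)).
  by apply: eq_bigl => w; rewrite andbT.
by rewrite prob_class_split //; apply: eq_bigr => r _; apply: eq_bigl => w; rewrite andbT.
Qed.

End ClassPartition.

Section SameOn.
Variables (m : nat) (Omega : finType) (T : 'I_m -> eqType) (W : forall i, Omega -> T i).

Lemma same_on_equiv A : equivalence_rel (same_on W A).
Proof.
apply/equivalence_relP; split => [w|w w' /forall_inP eq_ww' w''].
  exact/forall_inP.
apply/forall_inP/forall_inP => eq_w i Ai; first by rewrite -(eqP (eq_ww' i Ai)) eq_w.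
by rewrite (eqP (eq_ww' i Ai)) eq_w.
Qed.

Lemma same_on_subset (A B : {set 'I_m}) w w' :
  A \subset B -> same_on W B w w' -> same_on W A w w'.
Proof. by move/subsetP=> sAB /forall_inP eqB; apply/forall_inP => i /sAB /eqB. Qed.

Lemma same_on_setT_inv A w w1 w2 :
  same_on W setT w1 w2 -> same_on W A w w1 = same_on W A w w2.
Proof.
move=> /(same_on_subset (subsetT A)) /forall_inP eqA.
apply/forall_inP/forall_inP => eq_w i Ai; have := eq_w i Ai.
  by rewrite (eqP (eqA i Ai)).
by rewrite (eqP (eqA i Ai)).
Qed.

End SameOn.

Section Independence.
Variables (m : nat) (Omega : finType) (P : Omega -> R).
Variables (TX TY : 'I_m -> eqType)
  (X : forall i, Omega -> TX i) (Y : forall i, Omega -> TY i).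
Hypothesis XY_indep : independent P X Y.

Local Notation SX := (same_on X setT).
Local Notation SY := (same_on Y setT).

Lemma prob_indep (E F : pred Omega) :
  (forall w w', SX w w' -> E w = E w') ->
  (forall w w', SY w w' -> F w = F w') ->
  prob P (fun w => E w && F w) = prob P E * prob P F.
Proof.
move=> E_inv F_inv.
rewrite (prob_class_split P (same_on_equiv X setT) F E_inv).
rewrite (prob_class_sum P (same_on_equiv X setT) E_inv).
rewrite (prob_class_sum P (same_on_equiv Y setT) F_inv) big_distrlr /=.
apply: eq_bigr => rx _.
transitivity (prob P (fun w => F w && SX rx w)).
  by apply: eq_bigl => w; rewrite andbC.
rewrite (prob_class_split P (same_on_equiv Y setT) (SX rx) F_inv).
apply: eq_bigr => ry _; rewrite -XY_indep.
by apply: eq_bigl => w; rewrite andbC.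
Qed.

Lemma prob_same_on_club A w :
  prob P (same_on (club X Y) A w) = prob P (same_on X A w) * prob P (same_on Y A w).
Proof.
rewrite -prob_indep; last 2 first.
- by move=> w1 w2; apply: same_on_setT_inv.
- by move=> w1 w2; apply: same_on_setT_inv.
apply: eq_bigl => w'; rewrite /same_on /club.
apply/forall_inP/andP => [eqZ | [/forall_inP eqX /forall_inP eqY] i Ai].
  by split; apply/forall_inP => i /eqZ; rewrite xpair_eqE => /andP[].
by rewrite xpair_eqE eqX ?eqY.
Qed.

Hypothesis P_prob : is_prob P.

Lemma entropy_club A : entropy P (club X Y) A = entropy P X A + entropy P Y A.
Proof.
rewrite /entropy -Ropp_plus_distr -big_split /=; congr Ropp.
apply: eq_bigr => w _; rewrite prob_same_on_club.
have [P_ge0 _] := P_prob.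
(* Only points of positive mass need [ln_mult]: elsewhere the summand vanishes whatever
   junk value [ln 0] takes. *)
have [->|Pw_neq0] := Req_dec (P w) 0; first ring.
have prob_gt0 (T : 'I_m -> eqType) (W : forall i, Omega -> T i) : 0 < prob P (same_on W A w).
  have := prob_ge_mass P_ge0 (same_on_equiv W A w w w).1.
  by have := P_ge0 w; lra.
by rewrite ln_mult; [ring | exact: prob_gt0 | exact: prob_gt0].
Qed.

Lemma Delta_club Pt : Defs.Delta P (club X Y) Pt = Defs.Delta P X Pt + Defs.Delta P Y Pt.
Proof.
rewrite /Defs.Delta entropy_club.
under eq_bigr => A _ do rewrite entropy_club.
by rewrite big_split /Rdiv /=; ring.
Qed.

End Independence.

Lemma bigmin_le (I : finType) (p : pred I) (F : I -> R) x0 j :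
  p j -> \big[Rmin/x0]_(i | p i) F i <= F j.
Proof. by move=> pj; rewrite (big_rem_AC _ _ _ _ (mem_index_enum j)) pj; apply: Rmin_l. Qed.

Lemma bigmin_attained (I : finType) (p : pred I) (F : I -> R) j0 :
  p j0 -> exists2 j, p j & \big[Rmin/F j0]_(i | p i) F i = F j.
Proof.
move=> pj0; apply: (big_ind (fun v => exists2 j, p j & v = F j)); first by exists j0.
  move=> _ _ [i pi ->] [j pj ->].
  by apply: (Rmin_case (F i) (F j) (fun v => exists2 k, p k & v = F k)); [exists i | exists j].
by move=> i pi; exists i.
Qed.

Lemma singletons_valid (m : nat) : (2 <= m)%nat -> valid_partition (singletons m).
Proof.
move=> m_ge2; apply/andP; split.
  apply/and3P; split.
  - apply/eqP/setP => i; rewrite in_setT; apply/bigcupP; exists [set i].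
      by apply/imsetP; exists i.
    by rewrite in_set1.
  - apply/trivIsetP => _ _ /imsetP[i _ ->] /imsetP[j _ ->] neq_ij.
    by rewrite disjoints1 in_set1; apply: contra neq_ij => /eqP ->.
  - by apply/imsetP => -[i _] /setP /(_ i); rewrite in_set0 in_set1 eqxx.
by rewrite card_imset ?card_ord //; apply: set1_inj.
Qed.

Section MinimalPartition.
Variables (m : nat) (Omega : finType) (P : Omega -> R)
  (T : 'I_m -> eqType) (W : forall i, Omega -> T i).

Lemma MMI_le Pt : valid_partition Pt -> MMI P W <= Defs.Delta P W Pt.
Proof. exact: bigmin_le. Qed.

Lemma MMI_attained : (2 <= m)%nat ->
  exists2 Pt, valid_partition Pt & MMI P W = Defs.Delta P W Pt.
Proof. by move=> m_ge2; apply/bigmin_attained/singletons_valid. Qed.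

End MinimalPartition.

Close Scope R_scope.

Theorem proposition3 (m : nat) (hm : (2 <= m)%N) (Omega : finType) (P : Omega -> R)
  (TX TY : 'I_m -> finType)
  (X : forall i : 'I_m, Omega -> TX i) (Y : forall i : 'I_m, Omega -> TY i) :
  is_prob P -> independent P X Y ->
  (MMI P X + MMI P Y <= MMI P (club X Y))%R /\
  (MMI P (club X Y) = (MMI P X + MMI P Y)%R <->
     exists Pt, optimal_partition P X Pt /\ optimal_partition P Y Pt).
Proof.
move=> P_prob XY_indep.
have Delta_Z := Delta_club XY_indep P_prob.
have [Pt0 Pt0_valid] := MMI_attained P (club X Y) hm; rewrite Delta_Z => MMI_Z.
have := MMI_le P X Pt0_valid; have := MMI_le P Y Pt0_valid.
split; first lra.
split => [MMI_Z_eq | [Pt [[Pt_valid opt_X] [_ opt_Y]]]].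
  by exists Pt0; split; split => //; lra.
by have := MMI_le P (club X Y) Pt_valid; rewrite Delta_Z; lra.
Qed.
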